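(* Let $h\ge1$ be real. There is a unique sequence of positive real numbers $(r_n)_{n\ge1}$ satisfying $$r_n=hn-1+\frac{n^2}{r_{n+1}}\qquad\text{for all } n\ge1.$$ Moreover, this sequence satisfies, for all $n\ge1$, $$0<r_n-\alpha n+c<\frac{(\alpha-c)(c-1)}{\alpha n},$$ where $\alpha=\dfrac{h+\sqrt{h^2+4}}{2}$ and $c=\dfrac{1+\alpha}{2\alpha-h}=\dfrac12+\dfrac{h+2}{2\sqrt{h^2+4}}$. *)

From Stdlib Require Import Reals.
Open Scope R_scope.

(* A sequence (r_n)_{n>=1} is represented by r : nat -> R; only indices n >= 1 matter. *)
Definition good_seq (h : R) (r : nat -> R) : Prop :=
  forall n : nat, (1 <= n)%nat ->
    0 < r n /\ r n = h * INR n - 1 + (INR n)^2 / r (S n).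

Definition alpha (h : R) : R := (h + sqrt (h^2 + 4)) / 2.
Definition cst (h : R) : R := (1 + alpha h) / (2 * alpha h - h).

(* Write [a] for alpha and [T_n y = h n - 1 + n^2 / y], so that the recursion reads
   [r_n = T_n r_(n+1)].  The interval [J_n = [a n - c, a n - c + w_n]] with
   [w_n = (a - c)(c - 1) / (a n)] satisfies [T_n J_(n+1) ⊆ J_n], and on [J_(n+1)] the
   decreasing map [T_n] is a contraction with ratio [1 / a^2].  Hence the backward
   iterates [T_n ∘ ... ∘ T_(n+k-1)] of the left endpoints converge to a solution lying
   in every [J_n], which gives the bounds.  If [r'] is another positive solution, then
   [r'_(n+1) > n], so [d = r' - r] satisfies [|d_(n+1)| >= a |d_n|]; as [d_n = O(n)],
   this forces [d = 0]. *)

From Stdlib Require Import Reals Lra Lia Psatz.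
Open Scope R_scope.

Lemma Un_cv_const (c : R) : Un_cv (fun _ => c) c.
Proof. intros eps Heps; exists 0%nat; intros; unfold Rdist; rewrite Rminus_diag, Rabs_R0; lra. Qed.

Lemma Un_cv_bounds (u : nat -> R) (l lo hi : R) :
  (forall k, lo <= u k <= hi) -> Un_cv u l -> lo <= l <= hi.
Proof.
intros Hu Hl; split.
- apply (@Rle_cv_lim (fun _ => lo) u); [intro k; apply Hu | apply Un_cv_const | exact Hl].
- apply (@Rle_cv_lim u (fun _ => hi)); [intro k; apply Hu | exact Hl | apply Un_cv_const].
Qed.

Lemma Cauchy_crit_geometric (u : nat -> R) (q C : R) : 0 <= q < 1 ->
  (forall k j, Rabs (u (k + j)%nat - u k) <= C * q ^ k) -> Cauchy_crit u.
Proof.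
intros Hq Hu eps Heps.
assert (HC : 0 < Rabs C + 1) by (pose proof (Rabs_pos C); lra).
destruct (pow_lt_1_zero q ltac:(rewrite Rabs_right; lra) (eps / (Rabs C + 1))
           ltac:(apply Rdiv_lt_0_compat; lra)) as [N HN].
assert (Hgap : forall k j, (k >= N)%nat -> Rabs (u (k + j)%nat - u k) < eps).
{ intros k j Hk.
  assert (Hqk : 0 <= q ^ k) by (apply pow_le; lra).
  specialize (HN k Hk); rewrite Rabs_right in HN by lra.
  assert (q ^ k * (Rabs C + 1) < eps)
    by (apply Rmult_lt_reg_r with (/ (Rabs C + 1)); [apply Rinv_0_lt_compat; lra |];
        rewrite Rmult_assoc, Rinv_r, Rmult_1_r by lra; exact HN).
  pose proof (Hu k j); pose proof (Rle_abs C); nra. }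
exists N; intros n m Hn Hm; unfold Rdist.
destruct (Nat.le_ge_cases n m) as [Hnm | Hmn].
- replace m with (n + (m - n))%nat by lia; rewrite Rabs_minus_sym; apply Hgap, Hn.
- replace n with (m + (n - m))%nat by lia; apply Hgap, Hm.
Qed.

Lemma pow_gt_linear (a M : R) : 1 < a -> exists k : nat, M * INR (S k) < a ^ k.
Proof.
intros Ha; set (t := a - 1).
destruct (INR_archimed (t ^ 2) (3 * Rabs M) ltac:(unfold t; nra)) as [m Hm].
(* a^(2j) >= (1 + j t)^2 by Bernoulli, which beats a linear function of j. *)
set (j := S m); exists (j + j)%nat.
assert (Hj : INR m < INR j) by (apply lt_INR; unfold j; lia).
assert (Hj1 : 1 <= INR j) by (apply (le_INR 1); unfold j; lia).
assert (Hbern : 1 + INR j * t <= a ^ j) by (replace a with (1 + t) by (unfold t; ring); apply poly; unfold t; lra).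
rewrite pow_add, S_INR, plus_INR.
assert (M * (INR j + INR j + 1) <= 3 * Rabs M * INR j) by (pose proof (Rle_abs M); pose proof (Rabs_pos M); nra).
assert (Ht2 : 0 < t ^ 2) by (apply pow_lt; unfold t; lra).
assert (3 * Rabs M < INR j * t ^ 2) by nra.
assert (3 * Rabs M * INR j < INR j * INR j * t ^ 2) by nra.
assert (0 <= INR j * t) by (unfold t; nra).
nra.
Qed.

Lemma linear_bounded_geometric_growth_zero (u : nat -> R) (a K : R) : 1 < a ->
  (forall n, (1 <= n)%nat -> Rabs (u n) <= K * INR n) ->
  (forall n, (1 <= n)%nat -> a * Rabs (u n) <= Rabs (u (S n))) ->
  forall n, (1 <= n)%nat -> u n = 0.
Proof.
intros Ha Hlin Hgrow n Hn.
assert (Hiter : forall k, a ^ k * Rabs (u n) <= Rabs (u (n + k)%nat)).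
{ induction k as [| k IH]; [rewrite Nat.add_0_r; simpl; lra |].
  rewrite Nat.add_succ_r; simpl.
  pose proof (Hgrow (n + k)%nat ltac:(lia)); pose proof (pow_le a k ltac:(lra)); nra. }
destruct (Req_dec (u n) 0) as [| Hne]; [assumption | exfalso].
pose proof (Rabs_pos_lt _ Hne) as Hpos.
assert (HnR : 1 <= INR n) by (apply (le_INR 1) in Hn; exact Hn).
assert (HK : 0 <= K) by (pose proof (Hlin n Hn); pose proof (Rabs_pos (u n)); nra).
destruct (pow_gt_linear a (K * INR n / Rabs (u n)) Ha) as [k Hk].
pose proof (Hiter k); pose proof (Hlin (n + k)%nat ltac:(lia)) as Hnk.
rewrite plus_INR in Hnk; rewrite S_INR in Hk; pose proof (pos_INR k).
assert (K * INR n * (INR k + 1) < a ^ k * Rabs (u n)).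
{ apply (Rmult_lt_compat_r (Rabs (u n))) in Hk; [| exact Hpos].
  replace (K * INR n / Rabs (u n) * (INR k + 1) * Rabs (u n)) with (K * INR n * (INR k + 1)) in Hk
    by (field; lra).
  exact Hk. }
assert (K * (INR n + INR k) <= K * INR n * (INR k + 1)).
{ assert (0 <= K * (INR k * (INR n - 1))) by (apply Rmult_le_pos; [| apply Rmult_le_pos]; lra).
  nra. }
lra.
Qed.

Section BackwardOrbit.
Variables (T : nat -> R -> R) (lo hi : nat -> R) (q E : R).
Hypothesis q_range : 0 <= q < 1.
Hypothesis lo_le_hi : forall n, lo n <= hi n.
Hypothesis width_le : forall n, hi n - lo n <= E.
Hypothesis maps_into : forall n y, lo (S n) <= y <= hi (S n) -> lo n <= T n y <= hi n.
Hypothesis contracts : forall n y z, lo (S n) <= y <= hi (S n) -> lo (S n) <= z <= hi (S n) ->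
  Rabs (T n y - T n z) <= q * Rabs (y - z).

Fixpoint approx (k n : nat) : R :=
  match k with
  | O => lo n
  | S k => T n (approx k (S n))
  end.

Lemma approx_in k n : lo n <= approx k n <= hi n.
Proof.
revert n; induction k as [| k IH]; intros n; simpl.
- pose proof (lo_le_hi n); lra.
- apply maps_into, IH.
Qed.

Lemma approx_gap k j n : Rabs (approx (k + j) n - approx k n) <= E * q ^ k.
Proof.
revert n; induction k as [| k IH]; intros n; simpl.
- destruct (approx_in j n); pose proof (width_le n); rewrite Rabs_right; lra.
- eapply Rle_trans; [apply contracts; apply approx_in |].
  pose proof (IH (S n)); nra.
Qed.

Lemma approx_cauchy n : Cauchy_crit (fun k => approx k n).
Proof. apply (Cauchy_crit_geometric _ q E q_range); intros k j; apply approx_gap. Qed.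

Definition orbit (n : nat) : R := proj1_sig (R_complete _ (approx_cauchy n)).

Lemma approx_cv n : Un_cv (fun k => approx k n) (orbit n).
Proof. exact (proj2_sig (R_complete _ (approx_cauchy n))). Qed.

Lemma orbit_in n : lo n <= orbit n <= hi n.
Proof. apply (Un_cv_bounds (fun k => approx k n)); [intro k; apply approx_in | apply approx_cv]. Qed.

Lemma orbit_step n : orbit n = T n (orbit (S n)).
Proof.
apply (UL_sequence (fun k => approx (S k) n)).
- pose proof (CV_shift' _ 1 _ (approx_cv n)) as Hcv; simpl in Hcv.
  intros eps Heps; destruct (Hcv eps Heps) as [N HN]; exists N; intros k Hk.
  rewrite <- Nat.add_1_r; apply HN, Hk.
- intros eps Heps; destruct (approx_cv (S n) eps Heps) as [N HN]; exists N; intros k Hk.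
  unfold Rdist in *; simpl.
  eapply Rle_lt_trans; [apply contracts; [apply approx_in | apply orbit_in] |].
  pose proof (HN k Hk); pose proof (Rabs_pos (approx k (S n) - orbit (S n))); nra.
Qed.

Theorem backward_orbit_exists :
  exists r : nat -> R, forall n, lo n <= r n <= hi n /\ r n = T n (r (S n)).
Proof. exists orbit; intros n; split; [apply orbit_in | apply orbit_step]. Qed.

End BackwardOrbit.

Definition step (h : R) (n : nat) (y : R) : R := h * INR n - 1 + INR n ^ 2 / y.

(* For [a = alpha h], [offset a = cst h] and [lower a n], [upper a n] are the bounds of the theorem. *)
Definition offset (a : R) : R := a * (a + 1) / (a ^ 2 + 1).
Definition lower (a : R) (n : nat) : R := a * INR n - offset a.
Definition slack (a : R) (n : nat) : R :=
  (a - offset a) * (offset a - 1) / (a * INR n).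
Definition upper (a : R) (n : nat) : R := lower a n + slack a n.
Definition slack_bound (a : R) : R := (a - offset a) * (offset a - 1) / a.

Lemma step_sub h n y z : 0 < y -> 0 < z ->
  step h n y - step h n z = INR n ^ 2 * (z - y) / (y * z).
Proof. intros; unfold step; field; lra. Qed.

Lemma step_gap_expands a h n y z : 0 < a -> (1 <= n)%nat -> INR n < y -> a * INR n <= z ->
  a * Rabs (step h n y - step h n z) <= Rabs (y - z).
Proof.
intros Ha Hn Hy Hz; apply le_INR in Hn; simpl in Hn.
set (x := INR n) in *.
assert (0 < y) by lra; assert (0 < z) by nra.
rewrite step_sub by lra; fold x.
assert (0 < y * z) by nra.
unfold Rdiv; rewrite !Rabs_mult, (Rabs_right (x ^ 2)), (Rabs_right (/ (y * z)))
  by (apply Rle_ge; first [apply Rlt_le, Rinv_0_lt_compat | idtac]; nra).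
rewrite (Rabs_minus_sym z y).
assert (Hyz : a * x ^ 2 <= y * z) by nra.
apply (Rmult_le_reg_r (y * z)); [lra |].
replace (a * (x ^ 2 * Rabs (y - z) * / (y * z)) * (y * z)) with (a * x ^ 2 * Rabs (y - z))
  by (field; lra).
pose proof (Rabs_pos (y - z)); nra.
Qed.

Lemma good_seq_succ_gt h r : 1 <= h -> good_seq h r -> forall n, INR n < r (S n).
Proof.
intros Hh Hr n.
destruct (Hr (S n) ltac:(lia)) as [_ Heq]; destruct (Hr (S (S n)) ltac:(lia)) as [Hpos _].
rewrite S_INR in Heq; pose proof (pos_INR n).
assert (0 < (INR n + 1) ^ 2 / r (S (S n))) by (apply Rdiv_lt_0_compat; nra).
nra.
Qed.

Lemma good_seq_le_linear h r : 1 <= h -> good_seq h r ->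
  forall n, (1 <= n)%nat -> r n <= (h + 1) * INR n.
Proof.
intros Hh Hr n Hn.
destruct (Hr n Hn) as [_ Heq]; pose proof (good_seq_succ_gt h r Hh Hr n).
apply le_INR in Hn; simpl in Hn.
assert (Hq : INR n ^ 2 / r (S n) <= INR n ^ 2 / INR n).
{ unfold Rdiv; apply Rmult_le_compat_l; [nra |]; apply Rinv_le_contravar; lra. }
replace (INR n ^ 2 / INR n) with (INR n) in Hq by (field; lra).
lra.
Qed.

Section Offset.
Variable a : R.
Hypothesis a_gt1 : 1 < a.

Lemma sub_offset_pos : 0 < a - offset a.
Proof.
replace (a - offset a) with (a ^ 2 * (a - 1) / (a ^ 2 + 1)) by (unfold offset; field; nra).
apply Rdiv_lt_0_compat; [apply Rmult_lt_0_compat |]; nra.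
Qed.

Lemma offset_sub1 : offset a - 1 = (a - offset a) / a ^ 2.
Proof. unfold offset; field; nra. Qed.

Lemma offset_gt1 : 1 < offset a.
Proof.
pose proof sub_offset_pos as Hb.
assert (0 < (a - offset a) / a ^ 2) by (apply Rdiv_lt_0_compat; nra).
pose proof offset_sub1; lra.
Qed.

Lemma slack_pos n : (1 <= n)%nat -> 0 < slack a n.
Proof.
intros Hn; apply le_INR in Hn; simpl in Hn.
pose proof sub_offset_pos; pose proof offset_gt1.
unfold slack; apply Rdiv_lt_0_compat; nra.
Qed.

Lemma slack_le_bound n : (1 <= n)%nat -> slack a n <= slack_bound a.
Proof.
intros Hn; apply le_INR in Hn; simpl in Hn.
pose proof sub_offset_pos; pose proof offset_gt1.
unfold slack, slack_bound, Rdiv; apply Rmult_le_compat_l; [nra |].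
apply Rinv_le_contravar; nra.
Qed.

Lemma lower_pos n : (1 <= n)%nat -> 0 < lower a n.
Proof.
intros Hn; apply le_INR in Hn; simpl in Hn.
pose proof sub_offset_pos; unfold lower; nra.
Qed.

Lemma lower_S n : lower a (S n) = a * INR n + (a - offset a).
Proof. unfold lower; rewrite S_INR; ring. Qed.

End Offset.

Section Alpha.
Variable h : R.
Hypothesis h_pos : 0 < h.

Lemma alpha_sq : alpha h ^ 2 = h * alpha h + 1.
Proof.
unfold alpha; pose proof (sqrt_sqrt (h ^ 2 + 4) ltac:(nra)); nra.
Qed.

Lemma alpha_gt1 : 1 < alpha h.
Proof.
assert (2 < sqrt (h ^ 2 + 4)).
{ rewrite <- sqrt_square with 2 by lra; apply sqrt_lt_1_alt; nra. }
unfold alpha; lra.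
Qed.

Lemma alpha_sub_inv : h = alpha h - / alpha h.
Proof.
pose proof alpha_gt1; pose proof alpha_sq.
apply (Rmult_eq_reg_r (alpha h)); [| lra].
rewrite Rmult_minus_distr_r, Rinv_l by lra; nra.
Qed.

Lemma cst_offset : cst h = offset (alpha h).
Proof.
pose proof alpha_gt1; pose proof alpha_sq.
assert (Hden : alpha h ^ 2 + 1 = alpha h * (2 * alpha h - h)) by nra.
assert (0 < 2 * alpha h - h) by nra.
unfold cst, offset; rewrite Hden; field; lra.
Qed.

End Alpha.

Section Step.
Variables a h : R.
Hypothesis a_gt1 : 1 < a.
Hypothesis h_eq : h = a - / a.

Lemma step_lt_upper n y : (1 <= n)%nat -> lower a (S n) <= y -> step h n y < upper a n.
Proof.
intros Hn Hy; rewrite lower_S in Hy; apply le_INR in Hn; simpl in Hn.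
pose proof (sub_offset_pos a a_gt1) as Hb.
unfold upper, lower, slack, step; rewrite offset_sub1 by lra.
set (x := INR n) in *; set (b := a - offset a) in *.
assert (Hc : offset a = a - b) by (unfold b; ring).
assert (Hmono : x ^ 2 / y <= x ^ 2 / (a * x + b)).
{ unfold Rdiv; apply Rmult_le_compat_l; [nra |]; apply Rinv_le_contravar; nra. }
assert (Hb2 : b + b / a ^ 2 = a - 1) by (pose proof (offset_sub1 a a_gt1) as Hc1; fold b in Hc1; lra).
(* At [y = a x + b] the step lies [b^2 / (a^2 (a x + b))] above [lower a n], less than [slack a n]. *)
assert (Hid : h * x - 1 + x ^ 2 / (a * x + b)
              = a * x - offset a + b ^ 2 / (a ^ 2 * (a * x + b))).
{ assert (E : h * x - 1 + x ^ 2 / (a * x + b) - (a * x - (a - b) + b ^ 2 / (a ^ 2 * (a * x + b)))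
              = (a - 1) - (b + b / a ^ 2)) by (rewrite h_eq; field; split; nra).
  rewrite Hc; lra. }
assert (Hlt : b ^ 2 / (a ^ 2 * (a * x + b)) < b * (b / a ^ 2) / (a * x)).
{ replace (b * (b / a ^ 2) / (a * x)) with (b ^ 2 / (a ^ 2 * (a * x))) by (field; nra).
  assert (0 < a ^ 2 * (a * x)) by (apply Rmult_lt_0_compat; nra).
  unfold Rdiv; apply Rmult_lt_compat_l; [nra |]; apply Rinv_lt_contravar.
  - apply Rmult_lt_0_compat; nra.
  - apply Rmult_lt_compat_l; nra. }
lra.
Qed.

Lemma lower_lt_step n y : (1 <= n)%nat -> lower a (S n) <= y <= upper a (S n) ->
  lower a n < step h n y.
Proof.
intros Hn [Hlo Hhi]; rewrite lower_S in Hlo; apply le_INR in Hn; simpl in Hn.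
pose proof (sub_offset_pos a a_gt1) as Hb.
unfold upper, slack in Hhi; rewrite lower_S, offset_sub1, S_INR in Hhi by lra.
unfold lower, step.
set (x := INR n) in *; set (b := a - offset a) in *.
assert (Hc : offset a = 1 + b / a ^ 2) by (unfold b; pose proof (offset_sub1 a a_gt1); lra).
(* The claim is equivalent to [D < x^2 / y]. *)
set (D := x / a - b / a ^ 2).
assert (HD : h * x - 1 - (a * x - offset a) = - D) by (rewrite Hc, h_eq; unfold D; field; lra).
set (W := b * (b / a ^ 2) / (a * (x + 1))) in *.
assert (HW : D * W - b ^ 2 / a ^ 2 = b ^ 2 / (a ^ 3 * (x + 1)) * (D - a * (x + 1)))
  by (unfold W, D; field; split; nra).
assert (0 < b ^ 2 / (a ^ 3 * (x + 1))) by (apply Rdiv_lt_0_compat; [nra | apply Rmult_lt_0_compat; nra]).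
assert (D < a * (x + 1)).
{ assert (0 < / a < 1) by (split; [apply Rinv_0_lt_compat | rewrite <- Rinv_1; apply Rinv_lt_contravar]; lra).
  assert (x / a <= a * x) by (unfold Rdiv; nra).
  assert (0 <= b / a ^ 2) by (apply Rlt_le, Rdiv_lt_0_compat; nra). unfold D; nra. }
assert (HDy : D * y < x ^ 2).
{ assert (0 < y) by nra.
  destruct (Rle_or_lt D 0) as [HD0 | HD0]; [assert (D * y <= 0) by nra; nra |].
  assert (HDU : D * (a * x + b) = x ^ 2 - b ^ 2 / a ^ 2) by (unfold D; field; lra).
  nra. }
assert (x ^ 2 / y > D).
{ apply (Rmult_lt_reg_r y); [nra |]; unfold Rdiv; rewrite Rmult_assoc, Rinv_l, Rmult_1_r by nra; lra. }
lra.
Qed.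

Lemma step_contracts n y z : lower a (S n) <= y -> lower a (S n) <= z ->
  Rabs (step h n y - step h n z) <= / a ^ 2 * Rabs (y - z).
Proof.
intros Hy Hz; rewrite lower_S in Hy, Hz.
pose proof (sub_offset_pos a a_gt1); pose proof (pos_INR n).
set (x := INR n) in *.
assert (0 < y) by nra; assert (0 < z) by nra.
assert (Hyz : a ^ 2 * x ^ 2 <= y * z).
{ replace (a ^ 2 * x ^ 2) with ((a * x) * (a * x)) by ring.
  apply Rmult_le_compat; nra. }
rewrite step_sub by nra; fold x.
replace (x ^ 2 * (z - y) / (y * z)) with (x ^ 2 / (y * z) * (z - y)) by (field; nra).
rewrite (Rabs_minus_sym y z).
rewrite Rabs_mult, (Rabs_right (x ^ 2 / (y * z)))
  by (apply Rle_ge, Rmult_le_pos; [nra | apply Rlt_le, Rinv_0_lt_compat; nra]).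
apply Rmult_le_compat_r; [apply Rabs_pos |].
assert (0 < a ^ 2) by nra; assert (0 < y * z) by nra.
apply (Rmult_le_reg_r (a ^ 2 * (y * z))); [nra |].
replace (x ^ 2 / (y * z) * (a ^ 2 * (y * z))) with (a ^ 2 * x ^ 2) by (field; lra).
replace (/ a ^ 2 * (a ^ 2 * (y * z))) with (y * z) by (field; lra).
lra.
Qed.

Lemma solution_exists : exists r : nat -> R, forall n, (1 <= n)%nat ->
  lower a n <= r n <= upper a n /\ r n = step h n (r (S n)).
Proof.
assert (Hq : 0 <= / a ^ 2 < 1).
{ split; [apply Rlt_le, Rinv_0_lt_compat; nra |].
  rewrite <- Rinv_1; apply Rinv_lt_contravar; nra. }
destruct (backward_orbit_exists (fun m => step h (S m)) (fun m => lower a (S m))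
            (fun m => upper a (S m)) (/ a ^ 2) (slack_bound a) Hq) as [o Ho].
- intros m; pose proof (slack_pos a a_gt1 (S m) ltac:(lia)); unfold upper; lra.
- intros m; pose proof (slack_le_bound a a_gt1 (S m) ltac:(lia)); unfold upper; lra.
- intros m y Hy; split.
  + apply Rlt_le, lower_lt_step; [lia | exact Hy].
  + apply Rlt_le, step_lt_upper; [lia | apply Hy].
- intros m y z Hy Hz; apply step_contracts; [apply Hy | apply Hz].
- exists (fun n => o (pred n)); intros [| m] Hm; [lia |]; apply Ho.
Qed.

Lemma solution_strict_bounds r n : (1 <= n)%nat ->
  lower a (S n) <= r (S n) <= upper a (S n) -> r n = step h n (r (S n)) ->
  lower a n < r n < upper a n.
Proof.
intros Hn HJ Hr; rewrite Hr; split.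
- apply lower_lt_step; assumption.
- apply step_lt_upper; [assumption | apply HJ].
Qed.

Lemma solution_unique r r' : 1 <= h ->
  (forall n, (1 <= n)%nat -> lower a n <= r n <= upper a n /\ r n = step h n (r (S n))) ->
  good_seq h r' -> forall n, (1 <= n)%nat -> r' n = r n.
Proof.
intros Hh Hr Hr' n Hn; apply Rminus_diag_uniq; revert n Hn.
apply (linear_bounded_geometric_growth_zero (fun m => r' m - r m) a
         (h + 1 + a + slack_bound a) a_gt1).
- intros m Hm.
  destruct (Hr m Hm) as [[Hlo Hhi] _]; destruct (Hr' m Hm) as [Hpos _].
  pose proof (good_seq_le_linear h r' Hh Hr' m Hm).
  pose proof (lower_pos a a_gt1 m Hm); pose proof (slack_le_bound a a_gt1 m Hm).
  pose proof (offset_gt1 a a_gt1); pose proof (sub_offset_pos a a_gt1).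
  assert (0 < slack_bound a) by (pose proof (slack_pos a a_gt1 m Hm); lra).
  unfold upper, lower in *; apply le_INR in Hm; simpl in Hm.
  apply Rabs_le; split; nra.
- intros m Hm; simpl.
  destruct (Hr m Hm) as [_ Hrm]; destruct (Hr (S m) ltac:(lia)) as [[Hlo _] _].
  destruct (Hr' m Hm) as [_ Hr'm]; fold (step h m (r' (S m))) in Hr'm.
  rewrite lower_S in Hlo; pose proof (sub_offset_pos a a_gt1).
  rewrite Hrm, Hr'm; apply step_gap_expands; [lra | exact Hm | |].
  + apply (good_seq_succ_gt h); assumption.
  + lra.
Qed.

End Step.

Theorem lemma3 (h : R) (hh : 1 <= h) :
  exists r : nat -> R,
    good_seq h r /\
    (forall r' : nat -> R, good_seq h r' ->
       forall n : nat, (1 <= n)%nat -> r' n = r n) /\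
    (forall n : nat, (1 <= n)%nat ->
       0 < r n - alpha h * INR n + cst h /\
       r n - alpha h * INR n + cst h
         < (alpha h - cst h) * (cst h - 1) / (alpha h * INR n)).
Proof.
assert (Hh : 0 < h) by lra.
pose proof (alpha_gt1 h Hh) as Ha; pose proof (alpha_sub_inv h Hh) as Hah.
rewrite (cst_offset h Hh); set (a := alpha h) in *; clearbody a.
destruct (solution_exists a h Ha Hah) as [r Hr].
exists r; split; [| split].
- intros n Hn; destruct (Hr n Hn) as [HJ Hstep].
  pose proof (lower_pos a Ha n Hn); split; [lra | exact Hstep].
- intros r' Hr'; exact (solution_unique a h Ha r r' hh Hr Hr').
- intros n Hn.
  destruct (Hr n Hn) as [_ Hstep]; destruct (Hr (S n) ltac:(lia)) as [HJ _].
  pose proof (solution_strict_bounds a h Ha Hah r n Hn HJ Hstep).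
  unfold upper, lower, slack in *; lra.
Qed.
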